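(* Let $r\ge1$ and let $F$ be a graph with chromatic number $\chi(F)=r+1$. Then for every real $p>1$, as $n\to\infty$, $$\mathrm{ex}^{(p)}_\lambda(n,F)=\lambda^{(p)}(T_r(n))+o\!\left(n^{2-2/p}\right)=\left(1-\frac1r+o(1)\right)n^{2-2/p}.$$
   Context: For a graph $G$ on vertex set $\{1,\dots,n\}$ and real $p\ge1$, the $p$-spectral radius is $\lambda^{(p)}(G)=\max\{2\sum_{\{i,j\}\in E(G)}x_ix_j:\ x\in\mathbb R^n,\ |x_1|^p+\dots+|x_n|^p=1\}$. $\mathrm{ex}^{(p)}_\lambda(n,F)$ is the maximum of $\lambda^{(p)}(G)$ over all $n$-vertex graphs $G$ containing no subgraph isomorphic to $F$. $T_r(n)$ is the Turán graph: the complete $r$-partite graph on $n$ vertices with part sizes as equal as possible. *)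

From HB Require Import structures.
From mathcomp Require Import all_boot all_order all_algebra.
From mathcomp Require Import all_classical all_reals all_analysis.
Set Implicit Arguments. Unset Strict Implicit. Unset Printing Implicit Defensive.
Import Order.TTheory GRing.Theory Num.Theory.
Import numFieldNormedType.Exports.
Local Open Scope classical_set_scope.
Local Open Scope ring_scope.

Record sgraph (V : finType) := SGraph {
  adj : rel V;
  adj_sym : symmetric adj;
  adj_irr : irreflexive adj }.

Definition colorable (V : finType) (G : sgraph V) (k : nat) : bool :=
  [exists c : {ffun V -> 'I_k}, [forall u, forall v, adj G u v ==> (c u != c v)]].

Lemma colorable_exists (V : finType) (G : sgraph V) : exists k, colorable G k.
Proof.
exists #|V|; apply/existsP; exists [ffun u => enum_rank u].
apply/forallP => u; apply/forallP => v; apply/implyP => huv; rewrite !ffunE.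
apply/negP => /eqP /enum_rank_inj euv.
by move: huv; rewrite euv (adj_irr G).
Qed.

Definition chromatic_number (V : finType) (G : sgraph V) : nat :=
  ex_minn (colorable_exists G).

Definition contains (V W : finType) (G : sgraph W) (F : sgraph V) : Prop :=
  exists f : V -> W, injective f /\ forall u v, adj F u v -> adj G (f u) (f v).

Definition p_spectral_radius (R : realType) (p : R) (n : nat) (G : sgraph 'I_n) : R :=
  sup [set v : R | exists x : 'I_n -> R,
         \sum_(i < n) `|x i| `^ p = 1 /\
         v = 2 * \sum_(i < n) \sum_(j < n | (i < j)%N && adj G i j) x i * x j].

Definition ex_lambda (R : realType) (p : R) (n : nat) (V : finType) (F : sgraph V) : R :=
  sup [set v : R | exists G : sgraph 'I_n, ~ contains G F /\ v = p_spectral_radius p G].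

(* Turán graph T_r(n): vertex i lies in part (i mod r); parts have sizes
   differing by at most one. *)
Definition turan_adj (r n : nat) : rel 'I_n := fun (i j : 'I_n) => (i %% r != j %% r)%N.

Lemma turan_sym (r m : nat) : symmetric (@turan_adj r m).
Proof. by move=> i j; rewrite /turan_adj eq_sym. Qed.

Lemma turan_irr (r m : nat) : irreflexive (@turan_adj r m).
Proof. by move=> i; rewrite /turan_adj eqxx. Qed.

Definition turan (r n : nat) : sgraph 'I_n := @SGraph _ (@turan_adj r n) (@turan_sym r n) (@turan_irr r n).

(* Lower bound: the Turan graph T_r(n) is F-free because F is not
   r-colourable, and the constant unit vector n^(-1/p) gives lambda^(p)(T_r(n)) at least
   (1 - 1/r - 1/n) n^(2-2/p).  Upper bound: for an F-free G and a unit vector x, put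
   z = n^(1/p) |x|, so that sum z^p = n and, by Young's inequality, sum z <= n.  Rounding z
   down to a grid delta*k with bounded integers k changes the quadratic form by O(delta) n^2,
   entries above a threshold being paid for by sum z^p.  The integer weights k define a
   blow-up of G in which vertex i has k i copies; a copy of K_(r+1)(K|V|) in the blow-up would
   project to a copy of K_(r+1)(|V|) in G, hence of F.  So the Erdos-Stone theorem, proved from
   a minimum-degree version by passing to a subgraph maximising e(S) - c |S|^2, bounds the form
   of k by (1 - 1/r + o(1)) (sum k)^2. *)

From HB Require Import structures.
From mathcomp Require Import all_boot all_order all_algebra.
From mathcomp Require Import all_classical all_reals all_analysis.
From mathcomp Require Import ring lra zify.
Import Order.TTheory GRing.Theory Num.Theory.
Import numFieldNormedType.Exports.
Local Open Scope ring_scope.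
Set Implicit Arguments. Unset Strict Implicit. Unset Printing Implicit Defensive.

Definition take_set (T : finType) (A : {set T}) (t : nat) : {set T} :=
  [set x in take t (enum A)].

Lemma take_set_sub (T : finType) (A : {set T}) t : take_set A t \subset A.
Proof. by apply/fintype.subsetP => x; rewrite inE => /mem_take; rewrite mem_enum. Qed.

Lemma card_take_set (T : finType) (A : {set T}) t : (t <= #|A|)%N -> #|take_set A t| = t.
Proof.
move=> tA; rewrite /take_set cardsE (card_uniqP (take_uniq _ (enum_uniq _))).
by rewrite size_take -cardE; case: ltngtP tA.
Qed.

Lemma exists_large_fiber (T T' : finType) (f : T -> T') (A : {set T}) (B : {set T'}) t :
  {in A, forall x, f x \in B} -> (t * #|B| < #|A|)%N ->
  exists2 y, y \in B & (t < #|[set x in A | f x == y]|)%N.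
Proof.
move=> fAB tBA.
suff /exists_inP [y yB ty] : [exists y in B, t < #|[set x in A | f x == y]|]%N by exists y.
apply: contraLR tBA => /exists_inPn small; rewrite -leqNgt.
rewrite -sum1_card (partition_big f (mem B)) //= mulnC -sum_nat_const.
by apply: leq_sum => y yB; rewrite sum1dep_card leqNgt small.
Qed.

Section Degrees.
Variables (T : finType) (G : sgraph T).

Definition deg_in (S : {set T}) (v : T) : nat := (\sum_(w in S) adj G v w)%N.

Definition deg_sum (S : {set T}) : nat := (\sum_(u in S) deg_in S u)%N.

Lemma deg_inE (S : {set T}) v : deg_in S v = #|[set w in S | adj G v w]|.
Proof. by rewrite -sum1dep_card big_mkcondr; apply: eq_bigr => w _; case: adj. Qed.

Lemma deg_in_le (S : {set T}) v : (deg_in S v <= #|S|)%N.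
Proof. by rewrite /deg_in -sum1_card; apply: leq_sum => w _; exact: leq_b1. Qed.

Lemma deg_sum_le (S : {set T}) : (deg_sum S <= #|S| * #|S|)%N.
Proof. by rewrite /deg_sum -sum_nat_const; apply: leq_sum => u _; exact: deg_in_le. Qed.

Lemma sum_deg_in_sym (A B : {set T}) : (\sum_(w in A) deg_in B w = \sum_(u in B) deg_in A u)%N.
Proof.
rewrite /deg_in exchange_big; apply: eq_bigr => u _.
by apply: eq_bigr => w _; rewrite adj_sym.
Qed.

Lemma deg_sum_setD1 (S : {set T}) v : v \in S -> deg_sum S = (deg_sum (S :\ v) + 2 * deg_in S v)%N.
Proof.
move=> vS.
have deg_inD1 u : deg_in S u = (adj G u v + deg_in (S :\ v) u)%N.
  by rewrite /deg_in (big_setD1 v).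
rewrite /deg_sum (big_setD1 v) //=.
under eq_bigr => u _ do rewrite deg_inD1.
rewrite big_split /=.
have -> : (\sum_(u in S :\ v) adj G u v = deg_in S v)%N.
  by rewrite deg_inD1 adj_irr add0n; apply: eq_bigr => u _; rewrite adj_sym.
lia.
Qed.

(* The parts are pairwise disjoint because [adj G] is irreflexive. *)
Definition complete_partite (k t : nat) (S : {set T}) : Prop :=
  exists P : 'I_k -> {set T}, (forall i, P i \subset S /\ #|P i| = t) /\
    (forall i j, i != j -> {in P i & P j, forall x y, adj G x y}).

Lemma complete_partite_ge k t (S : {set T}) (P : 'I_k -> {set T}) :
  (forall i, P i \subset S /\ (t <= #|P i|)%N) ->
  (forall i j, i != j -> {in P i & P j, forall x y, adj G x y}) ->
  complete_partite k t S.
Proof.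
move=> PS Pcross; exists (fun i => take_set (P i) t); split=> [i|i j ij x y].
  have [PiS tPi] := PS i.
  by split; [exact: fintype.subset_trans (take_set_sub _ _) PiS | exact: card_take_set].
move=> /(fintype.subsetP (take_set_sub _ _)) xP /(fintype.subsetP (take_set_sub _ _)) yP.
exact: (Pcross _ _ ij).
Qed.

Lemma complete_partite_sub k t (S A : {set T}) :
  S \subset A -> complete_partite k t S -> complete_partite k t A.
Proof.
move=> SA [P [PS Pcross]]; exists P; split=> // i.
by have [PiS Pit] := PS i; split=> //; exact: fintype.subset_trans PiS SA.
Qed.

Lemma complete_partite_extend k t (S : {set T}) (P : 'I_k -> {set T}) (W : {set T}) :
  (forall i, P i \subset S /\ (t <= #|P i|)%N) ->
  (forall i j, i != j -> {in P i & P j, forall x y, adj G x y}) ->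
  W \subset S -> (t <= #|W|)%N -> (forall i, {in W & P i, forall w x, adj G w x}) ->
  complete_partite k.+1 t S.
Proof.
move=> PS Pcross WS tW WP.
pose P' i := if unlift ord_max i is Some j then P j else W.
apply: (@complete_partite_ge _ _ _ P') => [i|i j].
  by rewrite /P'; case: unliftP => [j _|_]; [exact: PS|].
rewrite /P'; case: (unliftP ord_max i) => [a ->|->]; case: (unliftP ord_max j) => [b ->|->].
- by rewrite (inj_eq lift_inj); exact: Pcross.
- by move=> _ x y xP yW; rewrite adj_sym; exact: (WP a y x).
- by move=> _ x y xW yP; exact: (WP b x y).
- by rewrite eqxx.
Qed.

Lemma complete_partite_of_common_nbhd k t (S W Z : {set T}) (Q : 'I_k -> {set T}) :
  (forall i, Q i \subset S) ->
  (forall i j, i != j -> {in Q i & Q j, forall x y, adj G x y}) ->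
  W \subset S -> (t < #|W|)%N ->
  {in W, forall w i, t <= deg_in (Q i) w}%N ->
  {in W, forall w, [set u in \bigcup_(i < k) Q i | adj G w u] = Z} ->
  complete_partite k.+1 t S.
Proof.
move=> QS Qcross WS tW Wdeg WZ.
have W_nbhd w i x : w \in W -> x \in Z :&: Q i -> adj G w x.
  by move=> /WZ <-; rewrite !inE => /andP [/andP [_ wx] _].
apply: (@complete_partite_extend k t S (fun i => Z :&: Q i) W) => [i|i j ij x y|//||i w x].
- split; first exact: fintype.subset_trans (subsetIr _ _) (QS i).
  have /card_gt0P [w0 w0W] : (0 < #|W|)%N by apply: leq_ltn_trans tW.
  apply: leq_trans (Wdeg _ w0W i) _; rewrite deg_inE subset_leq_card //.
  apply/fintype.subsetP => u; rewrite -(WZ _ w0W) !inE => /andP [uQ w0u].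
  by rewrite uQ w0u !andbT; apply/bigcupP; exists i.
- by rewrite !inE => /andP [_ xQ] /andP [_ yQ]; exact: Qcross ij x y xQ yQ.
- exact: ltnW.
- exact: W_nbhd.
Qed.

End Degrees.

Lemma leq_card_bigcup (T : finType) k (P : 'I_k -> {set T}) :
  (#|\bigcup_(i < k) P i| <= \sum_(i < k) #|P i|)%N.
Proof.
elim/big_ind2: _ => [|A a B b hA hB|//]; first by rewrite cards0.
by apply: leq_trans (leq_add hA hB); rewrite leq_card_setU.
Qed.

Section TuranDensity.
Variable R : numFieldType.

(* [turan_density 0 = 0] by the convention [0^-1 = 0]. *)
Definition turan_density (m : nat) : R := (m%:R - 1) / m%:R.

Lemma turan_densityE m : (0 < m)%N -> turan_density m = 1 - m%:R^-1.
Proof. by move=> m0; rewrite /turan_density mulrBl divff ?pnatr_eq0 -?lt0n // mul1r. Qed.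

Lemma turan_density_mulSn m : turan_density m.+1 * m.+1%:R = m%:R.
Proof. by rewrite /turan_density divfK ?pnatr_eq0 // -natr1 addrK. Qed.

Lemma turan_density_ge0 m : 0 <= turan_density m.
Proof.
case: m => [|m]; first by rewrite /turan_density invr0 mulr0.
by rewrite divr_ge0 // subr_ge0 ler1n.
Qed.

Lemma turan_density_le1 m : turan_density m <= 1.
Proof.
case: m => [|m]; first by rewrite /turan_density invr0 mulr0.
by rewrite turan_densityE // gerBl invr_ge0.
Qed.

Lemma turan_density_leS m : turan_density m <= turan_density m.+1.
Proof.
case: m => [|m].
  by rewrite [turan_density 1]turan_densityE // /turan_density invr0 mulr0 invr1 subrr.
by rewrite !turan_densityE // lerD2l lerN2 lef_pV2 ?posrE ?ltr0n ?ler_nat.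
Qed.

End TuranDensity.

Section MinDegree.
Variable R : realType.
Implicit Types (T : finType) (eps : R).

Lemma sum_deg_in_parts_le T (G : sgraph T) m s t (S : {set T}) (Q : 'I_m.+1 -> {set T}) :
  (forall i, #|Q i| = s) ->
  (\sum_(w in S) \sum_i deg_in G (Q i) w <=
    #|[set w in S | [forall i, t <= deg_in G (Q i) w]]| * (m.+1 * s) + #|S| * (m * s + t))%N.
Proof.
move=> Qs; set Good := [set w in S | _].
have deg_Q i w : (deg_in G (Q i) w <= s)%N by rewrite -(Qs i) deg_in_le.
have sum_deg_le w : w \in S ->
    (\sum_i deg_in G (Q i) w <= (w \in Good) * (m.+1 * s) + (m * s + t))%N.
  move=> wS; have [wG|] := boolP (w \in Good).
    rewrite mul1n; apply: leq_trans _ (leq_addr _ _).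
    apply: (@leq_trans (\sum_(i < m.+1) s)); first exact: leq_sum.
    by rewrite sum_nat_const card_ord.
  rewrite inE wS /= negb_forall => /existsP [i0]; rewrite -ltnNge => small_i0.
  rewrite (bigD1 i0) // mul0n add0n [leqRHS]addnC; apply: leq_add; first exact: ltnW.
  apply: (@leq_trans (\sum_(i < m.+1 | i != i0) s)); first exact: leq_sum.
  by rewrite sum_nat_const cardC1 card_ord.
apply: (@leq_trans (\sum_(w in S) ((w \in Good) * (m.+1 * s) + (m * s + t))));
  first exact: leq_sum.
rewrite big_split /= -big_distrl /= sum_nat_const leq_add2r leq_mul2r.
rewrite -sum1_card [leqLHS]big_mkcond [leqRHS]big_mkcond orbC leq_sum // => w _.
by case: (w \in S); case: (w \in Good).
Qed.

Lemma good_vertices_large T (G : sgraph T) m s t eps (S : {set T}) (Q : 'I_m.+1 -> {set T}) :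
  0 < eps -> 2 * t%:R / eps < s%:R ->
  (forall i, Q i \subset S /\ #|Q i| = s) ->
  (forall v, v \in S -> (turan_density R m.+1 + eps) * #|S|%:R <= (deg_in G S v)%:R) ->
  eps * #|S|%:R / 2 <= #|[set w in S | [forall i, t <= deg_in G (Q i) w]%N]|%:R.
Proof.
move=> eps0 ts QS Sdeg.
set c := turan_density R m.+1; set n := #|S|%:R; set g := #|[set w in S | _]|%:R.
have lower : (m.+1 * s)%:R * ((c + eps) * n) <= (\sum_(w in S) \sum_i deg_in G (Q i) w)%:R.
  rewrite exchange_big (eq_bigr _ (fun i _ => sum_deg_in_sym G S (Q i))) natr_sum.
  have -> : (m.+1 * s)%:R * ((c + eps) * n) = \sum_i \sum_(u in Q i) (c + eps) * n.
    under eq_bigr => i _ do rewrite sumr_const (proj2 (QS i)).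
    by rewrite sumr_const card_ord -mulrnA mulr_natl mulnC.
  apply: ler_sum => i _; rewrite natr_sum; apply: ler_sum => u uQ.
  exact/Sdeg/(fintype.subsetP (proj1 (QS i))).
move: (sum_deg_in_parts_le G t S (fun i => proj2 (QS i))).
rewrite -(ler_nat R) natrD !natrM natrD natrM -/n -/g => /(le_trans lower).
rewrite natrM => count.
have s0 : 0 < s%:R :> R by apply: le_lt_trans _ ts; rewrite divr_ge0 ?mulr_ge0 // ltW.
have ms0 : 0 < m.+1%:R * s%:R :> R by rewrite mulr_gt0.
have n0 : 0 <= n by rewrite /n ler0n.
have tn : 2 * t%:R * n <= eps * s%:R * n.
  by rewrite ler_wpM2r // ltW // [eps * _]mulrC -ltr_pdivrMr.
have sm : eps * s%:R * n <= m.+1%:R * s%:R * (eps * n).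
  have -> : m.+1%:R * s%:R * (eps * n) = m.+1%:R * (eps * s%:R * n) by ring.
  by apply: ler_peMl; rewrite ?ler1n // !mulr_ge0 // ltW.
have cn : m.+1%:R * s%:R * (c * n) = m%:R * s%:R * n.
  by rewrite -[in RHS](turan_density_mulSn R m) /c; ring.
rewrite -(ler_pM2r ms0); lra.
Qed.

(* In a copy of K_(m+1)(s) inside S, many vertices have t neighbours in every part; by
   pigeonhole t + 1 of them have the same neighbourhood in the copy and form a new part. *)
Lemma complete_partite_of_min_deg (m : nat) eps (t : nat) : 0 < eps ->
  exists n0 : nat, forall T (G : sgraph T) (S : {set T}), (n0 <= #|S|)%N ->
  (forall v, v \in S -> (turan_density R m + eps) * #|S|%:R <= (deg_in G S v)%:R) ->
  complete_partite G m.+1 t S.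
Proof.
move=> eps0; elim: m t => [|m IH] t.
  exists t => T G S tS _; apply: (@complete_partite_ge _ _ _ _ _ (fun=> S)) => [i|i j].
    by split.
  by rewrite !ord1 eqxx.
pose s := (Num.truncn (2 * t%:R / eps)).+1.
have [n1 Hn1] := IH s.
pose B := (t * 2 ^ (m.+1 * s))%N.
exists (maxn n1 (Num.truncn (2 * B%:R / eps)).+1) => T G S.
rewrite geq_max => /andP [n1S BS] Sdeg.
have [Q [QS Qcross]] : complete_partite G m.+1 s S.
  apply: Hn1 => // v vS; apply: le_trans (Sdeg v vS).
  by rewrite ler_wpM2r // lerD2r turan_density_leS.
pose U := \bigcup_(i < m.+1) Q i.
pose N w := [set u in U | adj G w u].
pose Good := [set w in S | [forall i, t <= deg_in G (Q i) w]%N].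
have Good_large : (t * #|powerset U| < #|Good|)%N.
  have UB : (t * #|powerset U| <= B)%N.
    rewrite card_powerset leq_mul2l leq_exp2l //; apply/orP; right.
    apply: leq_trans (leq_card_bigcup Q) _.
    by rewrite (eq_bigr (fun=> s)) => [|i _]; rewrite ?sum_nat_const ?card_ord ?(proj2 (QS i)).
  apply: leq_ltn_trans UB _; rewrite -(ltr_nat R).
  have := good_vertices_large (t := t) eps0 (truncnS_gt _) QS Sdeg.
  have BS' : 2 * B%:R < eps * #|S|%:R.
    by rewrite [eps * _]mulrC -ltr_pdivrMr // (lt_le_trans (truncnS_gt _)) ?ler_nat.
  apply: lt_le_trans; lra.
have NU w : N w \in powerset U.
  by rewrite powersetE; apply/fintype.subsetP => u; rewrite inE => /andP[].
have [Z _ tZ] := exists_large_fiber (fun w _ => NU w) Good_large.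
apply: (@complete_partite_of_common_nbhd _ G _ _ _ [set w in Good | N w == Z] Z Q _ Qcross)
  => [i||//|w|w]; rewrite ?inE.
- exact: proj1 (QS i).
- by apply/fintype.subsetP => w; rewrite !inE => /andP [/andP []].
- by move=> /andP [/andP [_ /forallP]].
- by move=> /andP [_ /eqP].
Qed.

End MinDegree.

Section ErdosStone.
Variable R : realType.
Implicit Types (T : finType) (eps : R).

Lemma deg_in_of_maximal T (G : sgraph T) (c : R) (S : {set T}) v : v \in S ->
  (deg_sum G (S :\ v))%:R - c * #|S :\ v|%:R ^+ 2 <= (deg_sum G S)%:R - c * #|S|%:R ^+ 2 ->
  c * (2 * #|S|%:R - 1) <= 2 * (deg_in G S v)%:R.
Proof.
move=> vS; rewrite (deg_sum_setD1 G vS) (cardsD1 v S) vS add1n -natr1 natrD natrM; lra.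
Qed.

(* A subset S of A maximising deg_sum S - (turan_density r + eps/2) |S|^2 is large and has
   minimum degree at least (turan_density r + eps/4) |S|. *)
Lemma erdos_stone (r t : nat) eps : 0 < eps -> exists M0 : nat,
  forall T (G : sgraph T) (A : {set T}), (M0 <= #|A|)%N ->
  (turan_density R r + eps) * #|A|%:R ^+ 2 <= (deg_sum G A)%:R -> complete_partite G r.+1 t A.
Proof.
move=> eps0; have eps4 : 0 < eps / 4 by rewrite divr_gt0.
have [n0 Hn0] := complete_partite_of_min_deg r t eps4.
pose X := maxn n0 (Num.truncn ((2 + eps) / eps)).+1.
pose q := (Num.truncn (2 / eps)).+1.
exists (X * q)%N => T G A XqA Adense.
pose c := turan_density R r + eps / 2.
pose phi (S : {set T}) := (deg_sum G S)%:R - c * #|S|%:R ^+ 2.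
have [S SA Smax] := @arg_maxP _ _ _ A (fun S : {set T} => S \subset A) phi (fintype.subxx A).
have XS : (X <= #|S|)%N.
  have S_large : eps / 2 * #|A|%:R ^+ 2 <= #|S|%:R ^+ 2.
    have phiAS : phi A <= phi S := Smax A (fintype.subxx A).
    have : (deg_sum G S)%:R <= #|S|%:R ^+ 2 :> R by rewrite expr2 -natrM ler_nat deg_sum_le.
    have : 0 <= turan_density R r + eps / 2.
      by rewrite addr_ge0 ?turan_density_ge0 // divr_ge0 // ltW.
    move=> c0 DS; have := mulr_ge0 c0 (exprn_ge0 2 (ler0n R #|S|)).
    rewrite /phi /c in phiAS; lra.
  rewrite -(ler_nat R) -ler_sqr ?nnegrE // (le_trans _ S_large) //.
  have q1 : 1 <= eps / 2 * q%:R ^+ 2.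
    have : 2 < eps * q%:R by rewrite mulrC -ltr_pdivrMr // truncnS_gt.
    have : 1 <= q%:R :> R by rewrite ler1n.
    rewrite expr2; nra.
  apply: (@le_trans _ _ (eps / 2 * (X * q)%:R ^+ 2)).
    by rewrite natrM exprMn mulrCA; apply: ler_peMr; rewrite ?exprn_ge0.
  apply: ler_wpM2l; first by rewrite divr_ge0 // ltW.
  by apply: lerXn2r; rewrite ?nnegrE // ler_nat.
apply: (complete_partite_sub SA); apply: Hn0 => [|v vS]; first exact: leq_trans (leq_maxl _ _) XS.
have Sbig : 2 + eps < eps * #|S|%:R.
  rewrite [eps * _]mulrC -ltr_pdivrMr // (lt_le_trans (truncnS_gt _)) // ler_nat.
  exact: leq_trans (leq_maxr _ _) XS.
have := deg_in_of_maximal vS (Smax _ (fintype.subset_trans (subD1set S v) SA)).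
have := turan_density_le1 R r; rewrite /c; lra.
Qed.

End ErdosStone.

Lemma colorable_chromatic_number (V : finType) (F : sgraph V) : colorable F (chromatic_number F).
Proof. by rewrite /chromatic_number; case: ex_minnP. Qed.

Lemma chromatic_number_min (V : finType) (F : sgraph V) k :
  colorable F k -> (chromatic_number F <= k)%N.
Proof. by rewrite /chromatic_number; case: ex_minnP => m _; apply. Qed.

Lemma contains_of_complete_partite (V W : finType) (F : sgraph V) (G : sgraph W) k (S : {set W}) :
  colorable F k -> complete_partite G k #|V| S -> contains G F.
Proof.
move=> /existsP [c /forallP c_proper] [P [PS Pcross]].
have PV i : #|V| = #|P i| by rewrite (proj2 (PS i)).
pose f v := enum_val (cast_ord (PV (c v)) (enum_rank v)).
have fP v : f v \in P (c v) by exact: enum_valP.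
have cf u v : adj F u v -> c u != c v by move=> uv; exact: (implyP (forallP (c_proper u) v)).
exists f; split=> [u v fuv|u v uv]; last exact: Pcross (cf u v uv) _ _ (fP u) (fP v).
have cuv : c u = c v.
  apply/eqP; apply: contraT => cne.
  by have := Pcross _ _ cne _ _ (fP u) (fP v); rewrite fuv adj_irr.
move: fuv; rewrite /f cuv => /enum_val_inj /cast_ord_inj; exact: enum_rank_inj.
Qed.

Lemma turan_free (V : finType) (F : sgraph V) r n : (0 < r)%N ->
  chromatic_number F = r.+1 -> ~ contains (turan r n) F.
Proof.
move=> r0 chiF [f [_ f_adj]].
have : colorable F r.
  apply/existsP; exists [ffun v => Ordinal (ltn_pmod (f v) r0)].
  apply/forallP => u; apply/forallP => v; apply/implyP => uv.
  by rewrite !ffunE -(inj_eq val_inj); exact: f_adj.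
by move/chromatic_number_min; rewrite chiF ltnn.
Qed.

Section Blowup.
Variables (W : finType) (G : sgraph W) (K : nat).

Definition blowup : sgraph (W * 'I_K)%type :=
  @SGraph _ (fun x y => adj G x.1 y.1) (fun x y => adj_sym G x.1 y.1) (fun x => adj_irr G x.1).

Lemma complete_partite_unblowup k t (A : {set (W * 'I_K)%type}) : (0 < K)%N ->
  complete_partite blowup k (K * t) A -> complete_partite G k t [set: W].
Proof.
move=> K0 [P [PS Pcross]].
apply: (@complete_partite_ge _ _ _ _ _ (fun i => [set x.1 | x in P i])) => [i|i j ij a b].
  split; first exact: finset.subsetT.
  have : P i \subset finset.setX [set x.1 | x in P i] [set: 'I_K].
    by apply/fintype.subsetP => -[a s] aP; rewrite !inE andbT; apply/imsetP; exists (a, s).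
  by move/subset_leq_card; rewrite cardsX cardsT card_ord (proj2 (PS i)) mulnC leq_pmul2r.
by move=> /imsetP [x xP ->] /imsetP [y yP ->]; exact: Pcross ij x y xP yP.
Qed.

End Blowup.

Section AdjForm.
Variables (R : realDomainType) (W : finType) (G : sgraph W).
Implicit Types x y : W -> R.

Definition adj_form x : R := \sum_i \sum_(j | adj G i j) x i * x j.

Lemma adj_formZ (a : R) x : adj_form (fun i => a * x i) = a ^+ 2 * adj_form x.
Proof.
rewrite /adj_form mulr_sumr; apply: eq_bigr => i _; rewrite mulr_sumr.
by apply: eq_bigr => j _; rewrite expr2 mulrACA.
Qed.

Lemma adj_form_le_norm x : adj_form x <= adj_form (fun i => `|x i|).
Proof. by apply: ler_sum => i _; apply: ler_sum => j _; rewrite -normrM ler_norm. Qed.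

Lemma adj_form_le_perturb x y : (forall i, 0 <= y i <= x i) ->
  adj_form x <= adj_form y + 2 * (\sum_i (x i - y i)) * \sum_i x i.
Proof.
move=> yx; have dx i : 0 <= x i - y i by rewrite subr_ge0; case/andP: (yx i).
have x0 i : 0 <= x i by case/andP: (yx i) => y0 /(le_trans y0).
pose e i j := (x i - y i) * x j + x i * (x j - y j).
have split_xx i j : x i * x j <= y i * y j + e i j.
  have /andP [y0i yxi] := yx i; have /andP [y0j yxj] := yx j.
  rewrite /e; nra.
apply: (@le_trans _ _ (adj_form y + \sum_i \sum_(j | adj G i j) e i j)).
  rewrite /adj_form -big_split /=; apply: ler_sum => i _.
  by rewrite -big_split; apply: ler_sum => j _; exact: split_xx.
rewrite lerD2l; apply: (@le_trans _ _ (\sum_i \sum_j e i j)).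
  apply: ler_sum => i _; rewrite [leRHS](bigID (adj G i)) lerDl.
  by apply: sumr_ge0 => j _; rewrite addr_ge0 // mulr_ge0.
rewrite /e (eq_bigr (fun i => (x i - y i) * \sum_j x j + x i * \sum_j (x j - y j))).
  by rewrite big_split /= -!mulr_suml; lra.
by move=> i _; rewrite big_split /= -!mulr_sumr.
Qed.

End AdjForm.

Definition blowup_set (W : finType) (K : nat) (k : W -> nat) : {set (W * 'I_K)%type} :=
  [set x : (W * 'I_K)%type | x.2 < k x.1]%N.

Section BlowupCount.
Variables (W : finType) (G : sgraph W) (K : nat) (k : W -> nat).
Hypothesis kK : forall i, (k i <= K)%N.

Lemma sum_blowup_set (F : W * 'I_K -> nat) :
  (\sum_(x in blowup_set K k) F x = \sum_i \sum_(s < K | s < k i) F (i, s))%N.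
Proof.
by rewrite pair_big_dep; apply: eq_big => -[i s] //; rewrite inE.
Qed.

Lemma card_blowup_set : #|blowup_set K k| = (\sum_i k i)%N.
Proof.
rewrite -sum1_card sum_blowup_set; apply: eq_bigr => i _.
by rewrite (big_ord_narrow (kK i)) sum_nat_const card_ord muln1.
Qed.

Lemma natr_deg_sum_blowup_set (R : realDomainType) :
  (deg_sum (blowup G K) (blowup_set K k))%:R = adj_form G (fun i => (k i)%:R : R).
Proof.
rewrite /deg_sum sum_blowup_set natr_sum; apply: eq_bigr => i _.
have deg_is s : deg_in (blowup G K) (blowup_set K k) (i, s) = (\sum_(j | adj G i j) k j)%N.
  rewrite /deg_in sum_blowup_set [RHS]big_mkcond; apply: eq_bigr => j _ /=.
  case: (adj G i j); last by rewrite big1.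
  by rewrite (big_ord_narrow (kK j)) sum_nat_const card_ord muln1.
rewrite (eq_bigr _ (fun s _ => deg_is s)) (big_ord_narrow (kK i)) sum_nat_const card_ord.
by rewrite natrM natr_sum mulr_sumr.
Qed.

End BlowupCount.

Lemma adj_form_nat_le_of_free (R : realType) (V : finType) (F : sgraph V) (r K : nat) (eps : R) :
  colorable F r.+1 -> 0 < eps -> (0 < K)%N -> exists M : nat,
  forall (W : finType) (G : sgraph W) (k : W -> nat), ~ contains G F -> (forall i, k i <= K)%N ->
  adj_form G (fun i => (k i)%:R) <= (turan_density R r + eps) * (\sum_i k i)%:R ^+ 2 + M%:R ^+ 2.
Proof.
move=> colF eps0 K0; have [M HM] := erdos_stone r (K * #|V|) eps0.
exists M => W G k G_free kK.
rewrite -(natr_deg_sum_blowup_set G kK) -(card_blowup_set kK).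
set A := blowup_set K k.
have M2 : 0 <= M%:R ^+ 2 :> R by rewrite exprn_ge0.
have dens0 : 0 <= (turan_density R r + eps) * #|A|%:R ^+ 2.
  by rewrite mulr_ge0 ?exprn_ge0 // addr_ge0 ?turan_density_ge0 // ltW.
have [AM|MA] := ltnP #|A| M.
  suff : (deg_sum (blowup G K) A)%:R <= M%:R ^+ 2 :> R by lra.
  apply: (@le_trans _ _ (#|A|%:R ^+ 2)); first by rewrite expr2 -natrM ler_nat deg_sum_le.
  by apply: lerXn2r; rewrite ?nnegrE // ler_nat ltnW.
have [dense|] := lerP ((turan_density R r + eps) * #|A|%:R ^+ 2) (deg_sum (blowup G K) A)%:R.
  case: G_free; apply: contains_of_complete_partite colF _.
  exact: complete_partite_unblowup K0 (HM _ _ _ MA dense).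
lra.
Qed.

Section Discretization.
Variable R : realType.

Lemma young_powR1 (p z : R) : 1 < p -> 0 <= z -> z <= z `^ p / p + (1 - p^-1).
Proof.
move=> p1 z0; have p0 : 0 < p by apply: lt_trans p1.
have q0 : 0 < p / (p - 1) by rewrite divr_gt0 // subr_gt0.
have pq : p^-1 + (p / (p - 1))^-1 = 1 by rewrite invf_div; field; rewrite gt_eqF.
have := conjugate_powR z0 ler01 p0 q0 pq.
rewrite mulr1 powR1 invf_div.
have -> : (p - 1) / p = 1 - p^-1 by field; rewrite gt_eqF.
by rewrite mul1r.
Qed.

Lemma sum_le_card_of_sum_powR (W : finType) (p : R) (z : W -> R) : 1 < p ->
  (forall i, 0 <= z i) -> \sum_i z i `^ p <= #|W|%:R -> \sum_i z i <= #|W|%:R.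
Proof.
move=> p1 z0 zp; have p0 : 0 < p by apply: lt_trans p1.
apply: (le_trans (ler_sum _ (fun i _ => young_powR1 p1 (z0 i)))).
rewrite big_split /= -mulr_suml sumr_const -mulr_natl.
have : (\sum_i z i `^ p) / p <= #|W|%:R / p by rewrite ler_pM2r ?invr_gt0.
lra.
Qed.

Lemma discretize (p delta : R) : 1 < p -> 0 < delta ->
  exists (K : nat) (q : R -> nat), (0 < K)%N /\ forall z, 0 <= z ->
  [/\ (q z <= K)%N, delta * (q z)%:R <= z & z - delta * (q z)%:R <= delta + delta * z `^ p].
Proof.
move=> p1 delta0; have p0 : 0 < p by apply: lt_trans p1.
(* Values above C are rounded to 0; for them z <= delta z^p. *)
pose C := delta^-1 `^ (p - 1)^-1.
have CP : C `^ (p - 1) = delta^-1.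
  by rewrite -powRrM mulVf ?subr_eq0 ?gt_eqF // powRr1 // invr_ge0 ltW.
pose K := (Num.truncn (C / delta)).+1.
exists K, (fun z => if z <= C then Num.truncn (z / delta) else 0%N); split=> // z z0.
have dzp : 0 <= delta * z `^ p by rewrite mulr_ge0 ?powR_ge0 // ltW.
case: ifPn => [zC|]; last first.
  rewrite -ltNge mulr0 subr0 => /ltW Cz; split=> //.
  have : delta^-1 <= z `^ (p - 1).
    by rewrite -CP; apply: ge0_ler_powR; rewrite ?nnegrE ?powR_ge0 // subr_ge0 ltW.
  move=> /(ler_wpM2l z0); rewrite mulr_powRB1 // -(ler_pM2l delta0) mulrCA mulfV ?gt_eqF //.
  rewrite mulr1; lra.
have q_le : (Num.truncn (z / delta))%:R <= z / delta by rewrite truncn_le divr_ge0 // ltW.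
have q_gt := truncnS_gt (z / delta); rewrite -natr1 in q_gt.
split.
- by apply: leq_trans (leqnSn _); apply: le_truncn; rewrite ler_pM2r ?invr_gt0.
- by rewrite mulrC -ler_pdivlMr.
- rewrite ltr_pdivrMr // in q_gt; lra.
Qed.

Lemma discretize_vector (p delta : R) : 1 < p -> 0 < delta ->
  exists K : nat, (0 < K)%N /\ forall (W : finType) (z : W -> R), (forall i, 0 <= z i) ->
  \sum_i z i `^ p <= #|W|%:R -> exists k : W -> nat,
  [/\ forall i, (k i <= K)%N, forall i, 0 <= delta * (k i)%:R <= z i
     & \sum_i (z i - delta * (k i)%:R) <= 2 * delta * #|W|%:R].
Proof.
move=> p1 delta0; have [K [q [K0 qP]]] := discretize p1 delta0.
exists K; split=> // W z z0 zp; exists (fun i => q (z i)); split=> [i|i|].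
- by case: (qP _ (z0 i)).
- by case: (qP _ (z0 i)) => _ ->; rewrite andbT mulr_ge0 // ltW.
have zq i : z i - delta * (q (z i))%:R <= delta + delta * z i `^ p by case: (qP _ (z0 i)).
apply: le_trans (ler_sum _ (fun i _ => zq i)) _.
rewrite big_split /= sumr_const -mulr_sumr -mulr_natr.
by have := ler_wpM2l (ltW delta0) zp; lra.
Qed.

End Discretization.

Lemma adj_form_scaled_nat_le (R : realType) (W : finType) (G : sgraph W) (k : W -> nat)
    (M : nat) (c delta eps : R) :
  0 <= c -> 0 < delta -> delta ^+ 2 <= eps -> (M <= #|W|)%N ->
  delta * (\sum_i k i)%:R <= #|W|%:R ->
  adj_form G (fun i => (k i)%:R) <= c * (\sum_i k i)%:R ^+ 2 + M%:R ^+ 2 ->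
  adj_form G (fun i => delta * (k i)%:R) <= (c + eps) * #|W|%:R ^+ 2.
Proof.
move=> c0 delta0 d2 MW sk /(ler_wpM2l (exprn_ge0 2 (ltW delta0))).
rewrite -adj_formZ; set n := #|W|%:R.
have : c * (delta * (\sum_i k i)%:R) ^+ 2 <= c * n ^+ 2.
  apply: (ler_wpM2l c0); apply: lerXn2r; rewrite ?nnegrE ?ler0n //.
  by rewrite mulr_ge0 // ltW.
have M2 : M%:R ^+ 2 <= n ^+ 2 by apply: lerXn2r; rewrite ?nnegrE ?ler0n // ler_nat.
have := ler_pM (exprn_ge0 2 (ltW delta0)) (exprn_ge0 2 (ler0n R M)) d2 M2.
rewrite exprMn; lra.
Qed.

Lemma adj_form_le_of_free (R : realType) (V : finType) (F : sgraph V) (r : nat) (p eps : R) :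
  colorable F r.+1 -> 1 < p -> 0 < eps -> exists N : nat,
  forall (W : finType) (G : sgraph W), (N <= #|W|)%N -> ~ contains G F ->
  forall z : W -> R, (forall i, 0 <= z i) -> \sum_i z i `^ p <= #|W|%:R ->
  adj_form G z <= (turan_density R r + eps) * #|W|%:R ^+ 2.
Proof.
move=> colF p1; wlog eps1 : eps / eps <= 1 => [small_eps|] eps0.
  have [e1|e1] := leP eps 1; first exact: small_eps.
  have [N HN] := small_eps 1 (lexx _) ltr01; exists N => W G NW G_free z z0 zp.
  apply: le_trans (HN W G NW G_free z z0 zp) _.
  by rewrite ler_wpM2r ?exprn_ge0 // lerD2l ltW.
pose delta := eps / 8; have delta0 : 0 < delta by rewrite divr_gt0.
have [K [K0 HK]] := discretize_vector p1 delta0.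
have [M HM] := adj_form_nat_le_of_free colF (divr_gt0 eps0 (ltr0n R 4)) K0.
exists M => W G MW G_free z z0 zp; set n := #|W|%:R.
have [k [kK yz szy]] := HK W z z0 zp; pose y i := delta * (k i)%:R.
have sz : \sum_i z i <= n := sum_le_card_of_sum_powR p1 z0 zp.
have sy : delta * (\sum_i k i)%:R <= n.
  rewrite natr_sum mulr_sumr; apply: le_trans sz; apply: ler_sum => i _.
  by case/andP: (yz i).
have c0 : 0 <= turan_density R r + eps / 4 by rewrite addr_ge0 ?turan_density_ge0 ?divr_ge0 ?ltW.
have d2 : delta ^+ 2 <= eps / 4.
  have : delta * delta <= delta * 1 by apply: (ler_wpM2l (ltW delta0)); rewrite /delta; lra.
  by rewrite expr2 /delta; lra.
have := adj_form_scaled_nat_le c0 delta0 d2 MW sy (HM W G k G_free kK).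
have := adj_form_le_perturb G yz.
have : 2 * (\sum_i (z i - y i)) * \sum_i z i <= 2 * (2 * delta * n) * n.
  have zy0 : 0 <= \sum_i (z i - y i).
    by apply: sumr_ge0 => i _; rewrite subr_ge0; case/andP: (yz i).
  have z_ge0 : 0 <= \sum_i z i by exact: sumr_ge0.
  by apply: ler_pM; rewrite ?mulr_ge0 ?ler_pM2l.
rewrite -/y /delta; lra.
Qed.

Section SpectralRadius.
Variable R : realType.
Implicit Types (p eps : R) (n : nat).

(* [0 <= b] covers the empty set, whose [sup] is [0]. *)
Lemma sup_le_ge0 (E : set R) (b : R) : 0 <= b -> (forall v, E v -> v <= b) -> sup E <= b.
Proof.
move=> b0 Eb; have [[v Ev]|E0] := pselect (exists v, E v).
  by apply: ge_sup; [exists v | exact: Eb].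
suff -> : E = set0 by rewrite sup0.
by apply/seteqP; split=> // v Ev; case: E0; exists v.
Qed.

Lemma powRVK (a p : R) : 0 <= a -> p != 0 -> (a `^ p^-1) `^ p = a.
Proof. by move=> a0 p0; rewrite -powRrM mulVf // powRr1. Qed.

Lemma powR_2B2V (a p : R) : 0 < a -> a `^ (2 - 2 / p) = a ^+ 2 / (a `^ p^-1) ^+ 2.
Proof.
move=> a0; rewrite powRB ?(gt_eqF a0) ?implybT // -!(powR_mulrn 2) ?powR_ge0 ?ltW //.
by rewrite -powRrM [p^-1 * _]mulrC.
Qed.

Lemma adj_form_pairs n (G : sgraph 'I_n) (x : 'I_n -> R) :
  adj_form G x = 2 * \sum_(i < n) \sum_(j < n | (i < j)%N && adj G i j) x i * x j.
Proof.
have split_ij i : \sum_(j | adj G i j) x i * x j = \sum_(j < n | (i < j)%N && adj G i j) x i * x j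
    + \sum_(j < n | (j < i)%N && adj G i j) x i * x j.
  rewrite (bigID (fun j : 'I_n => (i < j)%N)) /=; congr (_ + _); apply: eq_bigl => j.
    by rewrite andbC.
  by case: ltngtP => [||/ord_inj ->]; rewrite ?andbF ?andbT // adj_irr.
have lower_upper : \sum_(i < n) \sum_(j < n | (j < i)%N && adj G i j) x i * x j =
    \sum_(i < n) \sum_(j < n | (i < j)%N && adj G i j) x i * x j.
  under eq_bigr => i _ do rewrite big_mkcond.
  rewrite exchange_big; apply: eq_bigr => i _; rewrite [RHS]big_mkcond; apply: eq_bigr => j _.
  by rewrite adj_sym mulrC.
rewrite /adj_form (eq_bigr _ (fun i _ => split_ij i)) big_split /= lower_upper.
by rewrite mulr2n mulrDl mul1r.
Qed.

Lemma p_spectral_radiusE p n (G : sgraph 'I_n) : p_spectral_radius p G =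
  sup [set v | exists x : 'I_n -> R, \sum_i `|x i| `^ p = 1 /\ v = adj_form G x].
Proof.
by rewrite /p_spectral_radius; congr sup; apply/seteqP; split=> _ [x [x1 ->]];
  exists x; rewrite adj_form_pairs.
Qed.

Lemma normr_le1_of_sum_powR (W : finType) p (x : W -> R) i : 1 <= p ->
  \sum_j `|x j| `^ p = 1 -> `|x i| <= 1.
Proof.
move=> p1 x1; rewrite leNgt; apply/negP => xi1.
have : `|x i| `^ p <= 1.
  by rewrite -x1 (bigD1 i) //= lerDl; apply: sumr_ge0 => j _; exact: powR_ge0.
by have := le1r_powR (ltW xi1) p1; lra.
Qed.

Lemma adj_form_le_sqr (W : finType) (G : sgraph W) p (x : W -> R) : 1 <= p ->
  \sum_i `|x i| `^ p = 1 -> adj_form G x <= #|W|%:R ^+ 2.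
Proof.
move=> p1 x1; apply: le_trans (adj_form_le_norm G x) _.
apply: (@le_trans _ _ (\sum_(i : W) \sum_(j : W) 1)); last by rewrite !sumr_const expr2 mulr_natr.
apply: ler_sum => i _; rewrite [leRHS](bigID (adj G i)) /= ler_wpDr ?sumr_ge0 //.
apply: ler_sum => j _; rewrite -(mulr1 1) ler_pM ?normr_ge0 //; exact: normr_le1_of_sum_powR x1.
Qed.

Lemma p_spectral_radius_bounded p n (G : sgraph 'I_n) : 1 <= p ->
  has_ubound [set v | exists x : 'I_n -> R, \sum_i `|x i| `^ p = 1 /\ v = adj_form G x].
Proof.
move=> p1; exists (n%:R ^+ 2) => _ [x [x1 ->]].
by rewrite -[n in n%:R]card_ord (adj_form_le_sqr G p1 x1).
Qed.

Lemma p_spectral_radius_le_sqr p n (G : sgraph 'I_n) : 1 <= p -> p_spectral_radius p G <= n%:R ^+ 2.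
Proof.
move=> p1; rewrite p_spectral_radiusE.
apply: sup_le_ge0 => [|_ [x [x1 ->]]]; first exact: exprn_ge0.
by rewrite -[n in n%:R]card_ord (adj_form_le_sqr G p1 x1).
Qed.

Lemma p_spectral_radius_le_of_free (V : finType) (F : sgraph V) (r : nat) p eps :
  colorable F r.+1 -> 1 < p -> 0 < eps -> exists N : nat, forall n (G : sgraph 'I_n),
  (N <= n)%N -> ~ contains G F ->
  p_spectral_radius p G <= (turan_density R r + eps) * n%:R `^ (2 - 2 / p).
Proof.
move=> colF p1 eps0; have p0 : 0 < p by apply: lt_trans p1.
have [N HN] := adj_form_le_of_free colF p1 eps0.
exists (maxn N 1) => n G; rewrite geq_max => /andP [Nn n0] G_free.
have n0' : 0 < n%:R :> R by rewrite ltr0n.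
set rho := n%:R `^ p^-1; have rho0 : 0 < rho by rewrite powR_gt0.
rewrite p_spectral_radiusE powR_2B2V // mulrA; apply: sup_le_ge0 => [|_ [x [x1 ->]]].
  by rewrite divr_ge0 ?mulr_ge0 ?exprn_ge0 ?ler0n ?addr_ge0 ?turan_density_ge0 ?ltW.
apply: le_trans (adj_form_le_norm G x) _.
have zp : \sum_i (rho * `|x i|) `^ p <= #|'I_n|%:R.
  have rhop : rho `^ p = n%:R by rewrite powRVK ?gt_eqF ?ler0n.
  under eq_bigr => i _ do rewrite (powRM _ (ltW rho0) (normr_ge0 _)) rhop.
  by rewrite -mulr_sumr x1 mulr1 card_ord.
have NW : (N <= #|'I_n|)%N by rewrite card_ord.
have := HN _ G NW G_free _ (fun i => mulr_ge0 (ltW rho0) (normr_ge0 _)) zp.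
by rewrite adj_formZ card_ord ler_pdivlMr ?exprn_gt0 // mulrC.
Qed.

Lemma card_turan_nonadj r n (i : 'I_n) : (0 < r)%N ->
  (#|[set j | ~~ adj (turan r n) i j]| <= n %/ r + 1)%N.
Proof.
move=> r0; pose q (j : 'I_n) : 'I_(n %/ r).+1 := inord (j %/ r).
have q_inj : {in [set j | ~~ adj (turan r n) i j] &, injective q}.
  move=> j1 j2; rewrite !inE /= /turan_adj !negbK => /eqP j1i /eqP j2i /(congr1 (@nat_of_ord _)).
  rewrite /q !inordK ?ltnS ?leq_div2r 1?ltnW // => j12.
  by apply: ord_inj; rewrite (divn_eq j1 r) (divn_eq j2 r) j12 -j1i -j2i.
rewrite -(card_in_imset q_inj); apply: leq_trans (max_card _) _.
by rewrite card_ord addn1.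
Qed.

Lemma turan_deg_ge r n (i : 'I_n) : (0 < r)%N ->
  n%:R - (n%:R / r%:R + 1) <= \sum_(j | adj (turan r n) i j) (1 : R).
Proof.
move=> r0; have := card_turan_nonadj i r0; rewrite -(ler_nat R) natrD => nonadj.
have div_le : (n %/ r)%:R <= n%:R / r%:R :> R.
  by rewrite ler_pdivlMr ?ltr0n // -natrM ler_nat leq_trunc_div.
have : \sum_(j < n) (1 : R) =
    \sum_(j | adj (turan r n) i j) 1 + \sum_(j | ~~ adj (turan r n) i j) 1.
  exact: bigID.
rewrite [X in X = _]sumr_const card_ord [X in _ = _ + X]sumr_const.
rewrite (eq_card (B := [set j | ~~ adj (turan r n) i j])) => [|j]; last by rewrite !inE.
lra.
Qed.

Lemma p_spectral_radius_turan_ge r n p : (0 < r)%N -> 1 < p -> (0 < n)%N ->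
  (turan_density R r - n%:R^-1) * n%:R `^ (2 - 2 / p) <= p_spectral_radius p (turan r n).
Proof.
move=> r0 p1 n0; have p0 : 0 < p by apply: lt_trans p1.
have n0' : 0 < n%:R :> R by rewrite ltr0n.
pose c := n%:R `^ (- p^-1); have c0 : 0 <= c by exact: powR_ge0.
pose x (i : 'I_n) := c * 1.
have x1 : \sum_i `|x i| `^ p = 1.
  have cp : c `^ p = n%:R^-1 by rewrite -powRrM mulNr mulVf ?gt_eqF // powR_inv1 ?ler0n.
  under eq_bigr => i _ do rewrite /x mulr1 ger0_norm // cp.
  by rewrite sumr_const card_ord -[LHS]mulr_natr mulVf ?gt_eqF.
rewrite p_spectral_radiusE; apply: le_trans (ub_le_sup (p_spectral_radius_bounded _ (ltW p1)) _);
  last by exists x.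
rewrite adj_formZ powR_2B2V // -exprVn -powRN -/c.
apply: (@le_trans _ _ (c ^+ 2 * \sum_(i < n) (n%:R - (n%:R / r%:R + 1)))).
  have -> : \sum_(i < n) (n%:R - (n%:R / r%:R + 1)) = n%:R * (n%:R - (n%:R / r%:R + 1)) :> R.
    by rewrite sumr_const card_ord (mulr_natl (n%:R - (n%:R / r%:R + 1))).
  rewrite turan_densityE // [leLHS](_ : _ = c ^+ 2 * (n%:R * (n%:R - (n%:R / r%:R + 1)))) //.
  by field; rewrite ?gt_eqF ?ltr0n.
apply: ler_wpM2l; first exact: exprn_ge0.
by apply: ler_sum => i _; under eq_bigr => j _ do rewrite mulr1; exact: turan_deg_ge.
Qed.

Lemma p_spectral_radius_le_ex_lambda (V : finType) (F : sgraph V) p n (G : sgraph 'I_n) :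
  1 <= p -> ~ contains G F -> p_spectral_radius p G <= ex_lambda p n F.
Proof.
move=> p1 G_free; apply: ub_le_sup; last by exists G.
by exists (n%:R ^+ 2) => _ [H [_ ->]]; exact: p_spectral_radius_le_sqr.
Qed.

End SpectralRadius.

Local Open Scope classical_set_scope.
Local Open Scope ring_scope.

Section Asymptotics.
Variable R : realType.
Implicit Types (p eps : R) (n : nat).

Lemma ex_lambda_normalized_le (V : finType) (F : sgraph V) r p eps :
  colorable F r.+1 -> 1 < p -> 0 < eps ->
  \forall n \near \oo, ex_lambda p n F / n%:R `^ (2 - 2 / p) <= turan_density R r + eps.
Proof.
move=> colF p1 eps0; have [N HN] := p_spectral_radius_le_of_free colF p1 eps0.
near=> n; have n0 : (0 < n)%N by near: n; exact: nbhs_infty_gt.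
rewrite ler_pdivrMr ?powR_gt0 ?ltr0n //.
apply: sup_le_ge0 => [|_ [G [G_free ->]]].
  by rewrite mulr_ge0 ?powR_ge0 // addr_ge0 ?turan_density_ge0 // ltW.
by apply: HN G_free; near: n; exact: nbhs_infty_ge.
Unshelve. all: end_near.
Qed.

Lemma turan_normalized_ge r p eps : (0 < r)%N -> 1 < p -> 0 < eps ->
  \forall n \near \oo,
    turan_density R r - eps <= p_spectral_radius p (turan r n) / n%:R `^ (2 - 2 / p).
Proof.
move=> r0 p1 eps0; near=> n.
have n0 : (0 < n)%N by near: n; exact: nbhs_infty_gt.
rewrite ler_pdivlMr ?powR_gt0 ?ltr0n //; apply: le_trans (p_spectral_radius_turan_ge r0 p1 n0).
rewrite ler_wpM2r ?powR_ge0 // lerD2l lerN2 -[eps]invrK lef_pV2 ?posrE ?invr_gt0 ?ltr0n //.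
by near: n; exact: nbhs_infty_ger.
Unshelve. all: end_near.
Qed.

Lemma cvg_squeeze_eps (a b : nat -> R) (c : R) : (forall n, a n <= b n) ->
  (forall eps, 0 < eps -> \forall n \near \oo, c - eps <= a n) ->
  (forall eps, 0 < eps -> \forall n \near \oo, b n <= c + eps) ->
  a @ \oo --> c /\ b @ \oo --> c.
Proof.
move=> ab lo up; split; apply/cvgrPdist_le => eps eps0; near=> n; rewrite ler_distlC.
  apply/andP; split; first by near: n; exact: lo.
  by apply: le_trans (ab n) _; near: n; exact: up.
apply/andP; split; last by near: n; exact: up.
by apply: le_trans (ab n); near: n; exact: lo.
Unshelve. all: end_near.
Qed.

End Asymptotics.

Unset Implicit Arguments.

Theorem theorem3p10 (R : realType) (r : nat) (V : finType) (F : sgraph V) (p : R) :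
  (1 <= r)%N -> chromatic_number F = r.+1 -> 1 < p ->
  (fun n : nat => (ex_lambda p n F - p_spectral_radius p (turan r n))
                    / (n%:R `^ (2 - 2 / p))) @ \oo --> (0 : R)
  /\
  (fun n : nat => ex_lambda p n F / (n%:R `^ (2 - 2 / p))) @ \oo --> (1 - (r%:R : R)^-1).
Proof.
move=> r0 chiF p1.
have colF : colorable F r.+1 by rewrite -chiF; exact: colorable_chromatic_number.
have turan_le n : p_spectral_radius p (turan r n) / n%:R `^ (2 - 2 / p) <=
    ex_lambda p n F / n%:R `^ (2 - 2 / p).
  rewrite ler_wpM2r ?invr_ge0 ?powR_ge0 // p_spectral_radius_le_ex_lambda ?ltW //.
  exact: turan_free r0 chiF.
have [turan_cvg ex_cvg] := cvg_squeeze_eps turan_le (fun eps => turan_normalized_ge r0 p1)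
  (fun eps => ex_lambda_normalized_le colF p1).
rewrite -turan_densityE //.
split=> //; rewrite -(subrr (turan_density R r)).
under eq_fun => n do rewrite mulrBl.
exact: cvgB.
Qed.
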